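(* Let $n,q\ge1$ and let $c_1,c_2$ be integers with $c_1+c_2=-2$. If there exist a $PComS(n,q,c_1)$ and a $PComS(n,q,c_2)$, then there exists a partial Hadamard matrix $PH(2n\times 2(nq+1))$.
   Context: $\mathbb{Z}_2^n$ is the set of sequences $X=(x_0,\dots,x_{n-1})$ with entries in $\{+1,-1\}$, indices mod $n$. The periodic autocorrelation is $\mathsf{P}_X(k)=\sum_{i=0}^{n-1}x_ix_{i+k}$; it depends only on the cyclic-shift class $X_C$. A $PComS(n,q,c)$ is a list (repetitions allowed) of $q$ cyclic-shift classes $A_{1C},\dots,A_{qC}$ with $A_i\in\mathbb{Z}_2^n$ such that $\sum_{i=1}^q\mathsf{P}_{A_i}(k)=c$ for all $1\le k\le n-1$. A partial Hadamard matrix $PH(k\times m)$ is a $k\times m$ matrix $H$ with all entries in $\{+1,-1\}$ satisfying $HH^{t}=mI_k$. *)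

From HB Require Import structures.
From mathcomp Require Import all_boot all_order all_algebra.
Set Implicit Arguments. Unset Strict Implicit. Unset Printing Implicit Defensive.
Import Order.TTheory GRing.Theory Num.Theory.
Local Open Scope ring_scope.

Definition pm1 (x : int) : bool := (x == 1) || (x == -1).

Definition is_pmseq (n : nat) (X : seq int) : bool :=
  (size X == n) && all pm1 X.

Definition paut (X : seq int) (k : nat) : int :=
  \sum_(i < size X) X`_i * X`_((i + k) %% size X).

(* PComS(n,q,c): a list of q sequences of Z_2^n (representatives of the
   cyclic-shift classes; P_X only depends on the class) with
   sum_i P_{A_i}(k) = c for all 1 <= k <= n-1. *)
Definition PComS (n q : nat) (c : int) (L : seq (seq int)) : Prop :=
  [/\ size L = q,
      (forall X, X \in L -> is_pmseq n X) &
      (forall k : nat, (1 <= k <= n - 1)%N -> \sum_(X <- L) paut X k = c)].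

Definition PH (k m : nat) (H : 'M[int]_(k, m)) : Prop :=
  (forall i j, pm1 (H i j)) /\ H *m H^T = (m%:Z)%:M.

From HB Require Import structures.
From mathcomp Require Import all_boot all_order all_algebra zify.
Import GRing.Theory.
Set Implicit Arguments. Unset Strict Implicit. Unset Printing Implicit Defensive.
Local Open Scope ring_scope.

(* Turn each sequence A_t (resp. B_t) of the two complementary families into
   the n x n circulant matrix A_t (resp. B_t), and put A = [A_1 .. A_q],
   B = [B_1 .. B_q], A' = [A_1^T .. A_q^T], B' = [B_1^T .. B_q^T].  Then
     H = [ A   B   1  1 ]
         [ B' -A'  1 -1 ]
   is the required matrix.  Circulants are polynomials in the cyclic shift, so
   they commute with each other and with their transposes: hence A B'^T = B A'^T
   and A' A'^T + B' B'^T = A A^T + B B^T, which kills the off-diagonal blocks of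
   H H^T and reduces the bottom diagonal block to the top one.  The (i, j) entry
   of A_t A_t^T is the periodic autocorrelation of A_t at j - i, so summing over t
   gives nq on the diagonal and c_1 off it; together with B and the all-ones
   columns, the top block is 2(nq + 1) I + (c_1 + c_2 + 2) J = 2(nq + 1) I. *)

Section MxOverBlocks.
Variables (T : Type) (S : {pred T}).

Lemma mxOver_row_mx m n1 n2 (A : 'M[T]_(m, n1)) (B : 'M[T]_(m, n2)) :
  (row_mx A B \is a mxOver S) = (A \is a mxOver S) && (B \is a mxOver S).
Proof.
apply/mxOverP/andP => [S_AB | [/mxOverP S_A /mxOverP S_B] i j].
  by split; apply/mxOverP => i j; [rewrite -(row_mxEl A B) | rewrite -(row_mxEr A B)].
by rewrite mxE; case: split_ordP => j' _.
Qed.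

Lemma mxOver_col_mx m1 m2 n (A : 'M[T]_(m1, n)) (B : 'M[T]_(m2, n)) :
  (col_mx A B \is a mxOver S) = (A \is a mxOver S) && (B \is a mxOver S).
Proof.
apply/mxOverP/andP => [S_AB | [/mxOverP S_A /mxOverP S_B] i j].
  by split; apply/mxOverP => i j; [rewrite -(col_mxEu A B) | rewrite -(col_mxEd A B)].
by rewrite mxE; case: split_ordP => i' _.
Qed.

Lemma mxOver_tr m n (A : 'M[T]_(m, n)) : (A^T \is a mxOver S) = (A \is a mxOver S).
Proof. by apply/mxOverP/mxOverP => S_A i j; [rewrite -[A]trmxK | ]; rewrite mxE. Qed.

Lemma mxOver_mxrow m q (q_ : 'I_q -> nat) (B_ : forall t, 'M[T]_(m, q_ t)) :
  (forall t, B_ t \is a mxOver S) -> \mxrow_t B_ t \is a mxOver S.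
Proof. by move=> S_B; apply/mxOverP => i j; rewrite mxE; apply/mxOverP. Qed.

End MxOverBlocks.

Lemma castmx_mul (R : pzSemiRingType) m m' n n' p p'
    (em : m = m') (en : n = n') (ep : p = p') (A : 'M[R]_(m, n)) (B : 'M[R]_(n, p)) :
  castmx (em, en) A *m castmx (en, ep) B = castmx (em, ep) (A *m B).
Proof. by case: m' / em; case: n' / en; case: p' / ep; rewrite !castmx_id. Qed.

Lemma castmx_scalar (R : pzSemiRingType) m m' (e : m = m') (a : R) :
  castmx (e, e) (a%:M : 'M_m) = a%:M.
Proof. by case: m' / e; rewrite castmx_id. Qed.

Section Circulant.
Variables (R : comPzRingType) (n : nat).
Implicit Types a b : 'I_n.+1 -> R.

(* Indices are taken in the additive group 'I_n.+1 = Z/(n+1), so [j - i] is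
   reduced modulo n + 1. *)
Definition circulant a : 'M[R]_n.+1 := \matrix_(i, j) a (j - i).

Definition autocorr a (k : 'I_n.+1) : R := \sum_i a i * a (i + k).

Lemma eq_circulant a b : a =1 b -> circulant a = circulant b.
Proof. by move=> eq_ab; apply/matrixP => i j; rewrite !mxE. Qed.

Lemma circulantD a b : circulant a + circulant b = circulant (fun k => a k + b k).
Proof. by apply/matrixP => i j; rewrite !mxE. Qed.

Lemma circulant_sum (I : Type) (r : seq I) (P : pred I) (F : I -> 'I_n.+1 -> R) :
  \sum_(i <- r | P i) circulant (F i) = circulant (fun k => \sum_(i <- r | P i) F i k).
Proof.
by apply/matrixP => i j; rewrite summxE !mxE; apply: eq_bigr => l _; rewrite mxE.
Qed.

Lemma const_mx_circulant c : const_mx c = circulant (fun=> c).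
Proof. by apply/matrixP => i j; rewrite !mxE. Qed.

Lemma circulant_delta c : circulant (fun k => c *+ (k == 0)) = c%:M.
Proof. by apply/matrixP => i j; rewrite !mxE subr_eq0 eq_sym. Qed.

Lemma mxOver_circulant (S : {pred R}) a :
  (forall k, a k \in S) -> circulant a \is a mxOver S.
Proof. by move=> S_a; apply/mxOverP => i j; rewrite mxE. Qed.

Lemma tr_circulant a : (circulant a)^T = circulant (fun k => a (- k)).
Proof. by apply/matrixP => i j; rewrite !mxE opprB. Qed.

Lemma circulant_mul a b :
  circulant a *m circulant b = circulant (fun k => \sum_i a i * b (k - i)).
Proof.
apply/matrixP => i j; rewrite !mxE (reindex_inj (addIr i)) /=.
by apply: eq_bigr => h _; rewrite !mxE addrK opprD addrA addrAC.
Qed.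

Lemma circulantC a b : circulant a *m circulant b = circulant b *m circulant a.
Proof.
rewrite !circulant_mul; apply: eq_circulant => k.
by rewrite (reindex_inj (subrI k)) /=; apply: eq_bigr => h _; rewrite subKr mulrC.
Qed.

Lemma circulant_mul_tr a : circulant a *m (circulant a)^T = circulant (autocorr a).
Proof.
apply/matrixP => i j; rewrite !mxE (reindex_inj (addIr j)) /=.
by apply: eq_bigr => h _; rewrite !mxE addrK mulrC addrA.
Qed.

Lemma tr_circulant_mul a : (circulant a)^T *m circulant a = circulant a *m (circulant a)^T.
Proof. by rewrite tr_circulant circulantC. Qed.

End Circulant.

Section Doubling.
Variables (R : comPzRingType) (k l : nat).
Implicit Types A B C D : 'M[R]_(k, l).

Local Notation J := (const_mx 1 : 'M[R]_k).
Local Notation u := (const_mx 1 : 'M[R]_(k, 1)).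

Definition doubling A B C D : 'M[R]_(k + k, l + l + (1 + 1)) :=
  col_mx (row_mx (row_mx A B) (row_mx u u)) (row_mx (row_mx D (- C)) (row_mx u (- u))).

Lemma mul_ones_tr : u *m u^T = J.
Proof. by apply/matrixP => i j; rewrite !mxE big_ord1 !mxE mulr1. Qed.

Lemma doubling_mul_tr A B C D (s : R) :
    A *m A^T + B *m B^T + J *+ 2 = s%:M ->
    C *m C^T + D *m D^T = A *m A^T + B *m B^T ->
    A *m D^T = B *m C^T ->
  doubling A B C D *m (doubling A B C D)^T = s%:M.
Proof.
move=> top bot cross.
have cross_tr : D *m A^T = C *m B^T.
  by rewrite -[D]trmxK -trmx_mul cross trmx_mul trmxK.
rewrite tr_col_mx !tr_row_mx mul_col_row !mul_row_col !raddfN /=.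
rewrite !mulNmx !opprK mul_ones_tr cross cross_tr !subrr !addr0 -!mulr2n.
by rewrite [D *m _ + _]addrC bot top -scalar_mx_block.
Qed.

Lemma mxOver_doubling (S : opprClosed R) A B C D :
    1 \in S -> A \is a mxOver S -> B \is a mxOver S ->
    C \is a mxOver S -> D \is a mxOver S ->
  doubling A B C D \is a mxOver S.
Proof.
move=> S1 S_A S_B S_C S_D.
by rewrite mxOver_col_mx !mxOver_row_mx !rpredN !mxOver_const ?S_A ?S_B ?S_C ?S_D.
Qed.

End Doubling.

Section CirculantDoubling.
Variables (R : comPzRingType) (n q : nat).
Implicit Types a b : 'I_q -> 'I_n.+1 -> R.

Definition circulant_doubling a b :=
  doubling (\mxrow_t circulant (a t)) (\mxrow_t circulant (b t))
           (\mxrow_t (circulant (a t))^T) (\mxrow_t (circulant (b t))^T).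

Lemma mxrow_circulant_mul_tr a :
  \mxrow_t circulant (a t) *m (\mxrow_t circulant (a t))^T
  = circulant (fun k => \sum_t autocorr (a t) k).
Proof.
rewrite tr_mxrow mul_mxrow_mxcol -circulant_sum.
by apply: eq_bigr => t _; rewrite circulant_mul_tr.
Qed.

Lemma mxrow_tr_circulant_mul_tr a :
  \mxrow_t (circulant (a t))^T *m (\mxrow_t (circulant (a t))^T)^T
  = circulant (fun k => \sum_t autocorr (a t) k).
Proof.
rewrite tr_mxrow mul_mxrow_mxcol -circulant_sum.
by apply: eq_bigr => t _; rewrite trmxK tr_circulant_mul circulant_mul_tr.
Qed.

Lemma circulant_doubling_mul_tr a b (s : R) :
    (forall k, \sum_t autocorr (a t) k + \sum_t autocorr (b t) k + 2 = s *+ (k == 0)) ->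
  circulant_doubling a b *m (circulant_doubling a b)^T = s%:M.
Proof.
move=> autocorr_ab; apply: doubling_mul_tr.
- rewrite !mxrow_circulant_mul_tr const_mx_circulant mulr2n !circulantD.
  by rewrite -circulant_delta; apply: eq_circulant => k; rewrite -autocorr_ab.
- by rewrite !mxrow_tr_circulant_mul_tr !mxrow_circulant_mul_tr.
- rewrite !tr_mxrow !mul_mxrow_mxcol.
  by apply: eq_bigr => t _; rewrite !trmxK circulantC.
Qed.

Lemma mxOver_circulant_doubling (S : opprClosed R) a b :
    1 \in S -> (forall t k, a t k \in S) -> (forall t k, b t k \in S) ->
  circulant_doubling a b \is a mxOver S.
Proof.
move=> S1 S_a S_b.
by apply: mxOver_doubling => //; apply: mxOver_mxrow => t; rewrite ?mxOver_tr mxOver_circulant.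
Qed.

End CirculantDoubling.

Lemma pm1N x : pm1 (- x) = pm1 x.
Proof. by rewrite /pm1 !eqr_oppLR opprK orbC. Qed.

Fact pm1_oppr_closed : oppr_closed pm1.
Proof. by move=> x; rewrite /in_mem /= pm1N. Qed.

HB.instance Definition _ := GRing.isOppClosed.Build int pm1 pm1_oppr_closed.

Lemma paut_pmseq0 n X : is_pmseq n X -> paut X 0%N = n%:Z.
Proof.
case/andP=> /eqP size_X /allP pm1_X; rewrite /paut size_X.
rewrite (eq_bigr (fun=> 1)) => [|i _]; first by rewrite sumr_const card_ord natz.
rewrite addn0 modn_small //.
have : X`_i \in X by rewrite mem_nth ?size_X.
by move=> /pm1_X/orP[] /eqP ->.
Qed.

Lemma PComS_nth n q c L t : PComS n q c L -> (t < q)%N -> is_pmseq n (nth [::] L t).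
Proof. by case=> size_L pmseq_L _ t_lt_q; rewrite pmseq_L ?mem_nth ?size_L. Qed.

Lemma PComS_pm1 n q c L t k : PComS n q c L -> (t < q)%N -> (k < n)%N ->
  pm1 (nth [::] L t)`_k.
Proof.
move=> PL /(PComS_nth PL)/andP[/eqP size_X /allP pm1_X] k_lt_n.
by rewrite pm1_X ?mem_nth ?size_X.
Qed.

Lemma sum_paut_PComS n q c L k : PComS n q c L -> (k < n)%N ->
  \sum_(X <- L) paut X k = if k == 0%N then (n * q)%:Z else c.
Proof.
case=> size_L pmseq_L sum_L k_lt_n; case: eqP => [->|/eqP k_neq0].
  rewrite (eq_big_seq (fun=> n%:Z)) => [|X /pmseq_L]; last exact: paut_pmseq0.
  by rewrite big_const_seq count_predT size_L iter_addr_0 -mulr_natr natz.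
by apply: sum_L; lia.
Qed.

Lemma sum_autocorr_PComS n q c L (k : 'I_n.+1) : PComS n.+1 q c L ->
  \sum_(t < q) autocorr (fun i : 'I_n.+1 => (nth [::] L t)`_i) k
  = if k == 0 then (n.+1 * q)%:Z else c.
Proof.
move=> PL; have [size_L _ _] := PL.
rewrite -(sum_paut_PComS PL (ltn_ord k)) (big_nth [::]) size_L big_mkord.
apply: eq_bigr => t _; have /andP[/eqP size_X _] := PComS_nth PL (ltn_ord t).
by rewrite /paut size_X.
Qed.

Theorem theorem21 (n q : nat) (c1 c2 : int) :
  (1 <= n)%N -> (1 <= q)%N -> c1 + c2 = -2 ->
  (exists A : seq (seq int), PComS n q c1 A) ->
  (exists B : seq (seq int), PComS n q c2 B) ->
  exists H : 'M[int]_(2 * n, 2 * (n * q + 1)), PH H.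
Proof.
move=> n_gt0 _ c12 [A PA] [B PB]; case: n n_gt0 PA PB => // n _ PA PB.
pose a (t : 'I_q) (k : 'I_n.+1) := (nth [::] A t)`_k.
pose b (t : 'I_q) (k : 'I_n.+1) := (nth [::] B t)`_k.
have rows : (n.+1 + n.+1 = 2 * n.+1)%N by rewrite mul2n addnn.
have cols : (\sum_(t < q) n.+1 + \sum_(t < q) n.+1 + (1 + 1) = 2 * (n.+1 * q + 1))%N.
  by rewrite big_const_ord iter_addn_0 mulnDr muln1 mul2n -addnn.
have /mxOverP pm1_H : circulant_doubling a b \is a mxOver pm1.
  apply: mxOver_circulant_doubling => // t k.
    exact: PComS_pm1 PA (ltn_ord t) (ltn_ord k).
  exact: PComS_pm1 PB (ltn_ord t) (ltn_ord k).
exists (castmx (rows, cols) (circulant_doubling a b)); split.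
  by move=> i j; rewrite castmxE; apply: pm1_H.
rewrite trmx_cast castmx_mul (circulant_doubling_mul_tr (s := (2 * (n.+1 * q + 1))%:Z)).
  by rewrite castmx_scalar.
move=> k; rewrite (sum_autocorr_PComS k PA) (sum_autocorr_PComS k PB).
case: (k == 0); last by rewrite c12 mulr0n.
by rewrite mulr1n mulnDr muln1 mul2n -addnn !PoszD.
Qed.
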